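(* Let $S$ be an annulus, $(S,M,T)$ a triangulation, $B$ a boundary component of $S$, and $\chi_1,\chi_2$ admissible cuts of $(S,M,T)$ with $\chi_1(B)=\chi_2(B)$. Let $D=\{\triangle:\chi_{1,\triangle}(B)\ne\chi_{2,\triangle}(B)\}$. Then $\#D=2m$ for some $m\in\mathbb{N}$. Further, for each triangle $\triangle\in D$ there is a corresponding triangle $\triangle'$ with $\chi_{1,\triangle}(B)=\chi_{2,\triangle'}(B)$.
   Context: $M$ is a finite set of marked points on $\partial S$ with at least one on each boundary component; $T$ is a triangulation (maximal set of pairwise non-crossing arcs between marked points), dividing $S$ into triangles; internal triangles have no boundary segment as a side. An admissible cut $\chi$ selects one vertex (a marked point) of each internal triangle; each such choice is a local cut. $\chi(B)$ is the number of local cuts of $\chi$ whose marked point lies on $B$, and $\chi_{\triangle}(B)\in\{0,1\}$ is the number of local cuts of $\chi$ contained in the triangle $\triangle$ whose marked point lies on $B$. *)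

From mathcomp Require Import all_boot.
Set Implicit Arguments. Unset Strict Implicit. Unset Printing Implicit Defensive.

(* A triangulation (S,M,T), recorded combinatorially:
   - [marked]  : the finite set M of marked points;
   - [bcomp]   : the boundary components of S; [comp p] is the boundary
                 component on which the marked point p lies;
   - [edge]    : the edges of the triangulation (arcs of T and boundary
                 segments); [is_bseg e] says e is a boundary segment;
   - [tri]     : the triangles into which T divides S; each triangle has
                 three corners [corner t i] (a marked point, repetitions
                 allowed) and three sides [side t i]. *)
Record triangulation := Triangulation {
  marked : finType;
  bcomp : finType;
  comp : marked -> bcomp;
  edge : finType;
  is_bseg : pred edge;
  tri : finType;
  corner : tri -> 'I_3 -> marked;
  side : tri -> 'I_3 -> edge
}.

Definition marked_ok (T : triangulation) : Prop :=
  forall B : bcomp T, exists p : marked T, comp p = B.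

Definition annulus (T : triangulation) : Prop := #|bcomp T| = 2.

Definition internal (T : triangulation) (t : tri T) : bool :=
  [forall i : 'I_3, ~~ is_bseg (side t i)].

(* an admissible cut: a choice of a vertex (corner) of every triangle;
   only its values on internal triangles matter (the local cuts). *)
Definition cut (T : triangulation) := tri T -> 'I_3.

Definition chi_tri (T : triangulation) (chi : cut T) (t : tri T) (B : bcomp T) : nat :=
  if internal t then (comp (corner t (chi t)) == B) : nat else 0.

Definition chiB (T : triangulation) (chi : cut T) (B : bcomp T) : nat :=
  \sum_(t : tri T | internal t) chi_tri chi t B.

From mathcomp Require Import all_boot zify.

Set Implicit Arguments.
Unset Strict Implicit.
Unset Printing Implicit Defensive.

(* Only the values [chi_tri chi t B] in {0,1} matter, so the statement is about
   two 0/1-valued functions f, g on a finite set with equal sums.  They agree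
   off D, hence also have equal sums over D; on D one has g = 1 - f, so D splits
   into the triangles where f = 1 and those where g = 1, which are equally many. *)

Section ZeroOneFunctions.

Variables (T : finType) (f g : T -> nat).
Hypotheses (f_le1 : forall t, f t <= 1) (g_le1 : forall t, g t <= 1).
Hypothesis sum_fg : \sum_t f t = \sum_t g t.

Let D := [set t | f t != g t].

Lemma sum_diff_set : \sum_(t in D) f t = \sum_(t in D) g t.
Proof.
have fg_off_D t : t \notin D -> f t = g t by rewrite inE negbK => /eqP.
move: sum_fg; rewrite [LHS](bigID (mem D)) [RHS](bigID (mem D)) /=.
by rewrite [X in _ + X = _](eq_bigr g) => [/addIn|t /fg_off_D].
Qed.

Lemma add_diff_set t : t \in D -> f t + g t = 1.
Proof. by rewrite inE; move: (f_le1 t) (g_le1 t); lia. Qed.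

Lemma card_diff_set : #|D| = 2 * \sum_(t in D) f t.
Proof.
rewrite -sum1_card mul2n -addnn {2}sum_diff_set -big_split /=.
by apply: eq_bigr => t /add_diff_set.
Qed.

Lemma diff_set_one (h : T -> nat) : (forall t, h t <= 1) ->
  0 < \sum_(t in D) h t -> exists2 t, t \in D & h t = 1.
Proof.
move=> h_le1; rewrite lt0n sum_nat_eq0 => /forallPn [t].
by rewrite negb_imply => /andP [tD /negbTE ht]; exists t; move: (h_le1 t) ht; lia.
Qed.

Lemma diff_set_swap t : t \in D -> exists2 t', t' \in D & f t = g t'.
Proof.
move=> tD; have fg_t := add_diff_set tD.
have sum_pos (h : T -> nat) : h t = 1 -> 0 < \sum_(t in D) h t.
  by move=> ht; rewrite (bigD1 t tD) /= ht.
have [ft0 | ft1] : f t = 0 \/ f t = 1 by lia.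
- have : 0 < \sum_(t in D) f t by rewrite sum_diff_set; apply: sum_pos; lia.
  case/(diff_set_one f_le1) => t' t'D ft'.
  by exists t' => //; have := add_diff_set t'D; lia.
- have : 0 < \sum_(t in D) g t by rewrite -sum_diff_set; apply: sum_pos.
  by case/(diff_set_one g_le1) => t' t'D gt'; exists t'; rewrite ?ft1.
Qed.

End ZeroOneFunctions.

Lemma chi_tri_le1 (T : triangulation) (chi : cut T) t B : chi_tri chi t B <= 1.
Proof. by rewrite /chi_tri; case: internal => //; case: eqP. Qed.

Lemma chiBE (T : triangulation) (chi : cut T) B :
  chiB chi B = \sum_(t : tri T) chi_tri chi t B.
Proof.
rewrite /chiB [RHS](bigID (@internal T)) /= [X in _ = _ + X]big1 ?addn0 //.
by move=> t /negbTE t_ext; rewrite /chi_tri t_ext.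
Qed.

Theorem lemma6p11 (T : triangulation) (hM : marked_ok T) (hA : annulus T)
  (B : bcomp T) (chi1 chi2 : cut T)
  (hB : chiB chi1 B = chiB chi2 B) :
  let D := [set t : tri T | chi_tri chi1 t B != chi_tri chi2 t B] in
  (exists m : nat, #|D| = 2 * m) /\
  (forall t, t \in D -> exists2 t', t' \in D & chi_tri chi1 t B = chi_tri chi2 t' B).
Proof.
move: hB; rewrite !chiBE => hB D.
have le1 chi t : chi_tri chi t B <= 1 := chi_tri_le1 chi t B.
split; first by eexists; apply: card_diff_set (le1 chi1) (le1 chi2) hB.
exact: diff_set_swap (le1 chi1) (le1 chi2) hB.
Qed.
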